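(* Let $d_*\ge1$ and $\Delta\in\mathbb N$, $\Delta\ge1$. Let $\approx_\Delta$ be the equivalence relation on $\mathbb Z^{d_*}$ generated by the relation: $a\sim b$ iff $|a|=|b|$ and $[a-b]\le\Delta$, and let $$d_\Delta=\sup\{[a-b]:\ a,b\in\mathbb Z^{d_*},\ a\approx_\Delta b\}.$$ Then $$d_\Delta\le C\,\Delta^{\frac{(d_*+1)!}{2}},$$ where $C$ depends only on $d_*$.
   Context: For $a\in\mathbb Z^{d_*}$, $|a|$ denotes the Euclidean norm, and $[a-b]=\min(|a-b|,|a+b|)$ for $a,b\in\mathbb Z^{d_*}$. ''Generated by'' means the smallest equivalence relation containing $\sim$ (i.e. $a\approx_\Delta b$ iff there is a finite chain $a=c_0\sim c_1\sim\dots\sim c_k=b$). *)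

From HB Require Import structures.
From mathcomp Require Import all_boot all_order all_algebra.
From Stdlib Require Import Relations.
Set Implicit Arguments. Unset Strict Implicit. Unset Printing Implicit Defensive.
Import Order.TTheory GRing.Theory Num.Theory.
Local Open Scope ring_scope.

Definition enorm (R : rcfType) (d : nat) (a : 'rV[int]_d) : R :=
  Num.sqrt (\sum_(i < d) ((a 0 i)%:~R) ^+ 2).

Definition bracket (R : rcfType) (d : nat) (a b : 'rV[int]_d) : R :=
  Num.min (enorm R (a - b)) (enorm R (a + b)).

Definition simD (R : rcfType) (d Delta : nat) (a b : 'rV[int]_d) : Prop :=
  enorm R a = enorm R b /\ bracket R a b <= Delta%:R.

Definition approxD (R : rcfType) (d Delta : nat) : relation 'rV[int]_d :=
  clos_refl_sym_trans _ (@simD R d Delta).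

From HB Require Import structures.
From mathcomp Require Import all_boot all_order all_algebra.
From mathcomp Require Import perm.
From Stdlib Require Import Relations.
From mathcomp Require Import ring lra zify.
Import Order.TTheory GRing.Theory Num.Theory.
Local Open Scope ring_scope.
Set Implicit Arguments. Unset Strict Implicit. Unset Printing Implicit Defensive.

(* Chains for ~ become, after flipping signs, walks b_0, b_1, ... of integer
   points on a sphere with steps of length at most Delta.  Induct on the
   dimension r of the span of the steps: at the first index j where the span
   V of the first j + 1 steps reaches dimension r, the starting points of the
   earlier steps are close to b_0 by induction.  As b_0 and b_m lie on a common
   sphere and b_m - b_0 lies in V, |b_m - b_0| <= 2 |P_V b_0|.  Computing P_V b_0
   in a basis of V made of steps, whose Gram matrix G is integral (so
   |det G| >= 1 and Cramer's rule bounds the entries of G^-1), and bounding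
   each <b_0, w> through the starting point of the step w gives a bound on
   |b_m - b_0|^2 of degree r (r + 1) in Delta; and d (d + 1) <= (d + 1)!. *)

Section DotProduct.
Variables (R : rcfType) (d : nat).
Implicit Types x y z : 'rV[R]_d.

Definition dot x y : R := (x *m y^T) 0 0.
Definition sqnorm x := dot x x.

Lemma dotE x y : dot x y = \sum_(i < d) x 0 i * y 0 i.
Proof. by rewrite /dot mxE; apply: eq_bigr => i _; rewrite mxE. Qed.

Lemma dotC x y : dot x y = dot y x.
Proof. by rewrite !dotE; apply: eq_bigr => i _; rewrite mulrC. Qed.

Lemma dotDl x y z : dot (x + y) z = dot x z + dot y z.
Proof. by rewrite /dot mulmxDl mxE. Qed.

Lemma dotNl x y : dot (- x) y = - dot x y.
Proof. by rewrite /dot mulNmx mxE. Qed.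

Lemma dotZl a x y : dot (a *: x) y = a * dot x y.
Proof. by rewrite /dot -scalemxAl mxE. Qed.

Lemma dotBl x y z : dot (x - y) z = dot x z - dot y z.
Proof. by rewrite dotDl dotNl. Qed.

Lemma dotNr x y : dot x (- y) = - dot x y.
Proof. by rewrite dotC dotNl dotC. Qed.

Lemma dotZr a x y : dot x (a *: y) = a * dot x y.
Proof. by rewrite dotC dotZl dotC. Qed.

Lemma sqnorm0 : sqnorm 0 = 0.
Proof. by rewrite /sqnorm /dot mul0mx mxE. Qed.

Lemma sqnorm_ge0 x : 0 <= sqnorm x.
Proof. by rewrite /sqnorm dotE; apply: sumr_ge0 => i _; rewrite -expr2 sqr_ge0. Qed.

Lemma sqnorm_eq0 x : sqnorm x = 0 -> x = 0.
Proof.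
rewrite /sqnorm dotE => /eqP; rewrite psumr_eq0 => [/allP x0|i _]; last first.
  by rewrite -expr2 sqr_ge0.
apply/rowP => i; rewrite mxE.
by have /implyP/(_ isT) := x0 i (mem_index_enum i); rewrite mulf_eq0 orbb => /eqP.
Qed.

Lemma sqnormD x y : sqnorm (x + y) = sqnorm x + 2 * dot x y + sqnorm y.
Proof. by rewrite /sqnorm !dotDl ![dot _ (x + y)]dotC !dotDl (dotC y x); ring. Qed.

Lemma sqnormN x : sqnorm (- x) = sqnorm x.
Proof. by rewrite /sqnorm dotNl dotNr opprK. Qed.

Lemma sqnormZ a x : sqnorm (a *: x) = a ^+ 2 * sqnorm x.
Proof. by rewrite /sqnorm dotZl dotZr mulrA expr2. Qed.

Lemma cauchy_schwarz x y : dot x y ^+ 2 <= sqnorm x * sqnorm y.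
Proof.
have [y0|y_neq0] := eqVneq (sqnorm y) 0.
  by rewrite (sqnorm_eq0 y0) /dot trmx0 mulmx0 mxE expr0n mulr_ge0 ?sqnorm_ge0.
have y_gt0 : 0 < sqnorm y by rewrite lt_def y_neq0 sqnorm_ge0.
have := sqnorm_ge0 (x - (dot x y / sqnorm y) *: y).
rewrite sqnormD dotNr dotZr sqnormN sqnormZ.
set t := dot x y / sqnorm y => dist_ge0.
rewrite -subr_ge0.
have -> : sqnorm x * sqnorm y - dot x y ^+ 2 =
    sqnorm y * (sqnorm x + 2 * - (t * dot x y) + t ^+ 2 * sqnorm y).
  by rewrite /t; field; rewrite y_neq0.
by apply: mulr_ge0 => //; apply: ltW.
Qed.

End DotProduct.

Section Projection.
Variables (R : rcfType) (d r : nat) (W : 'M[R]_(r, d)).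
Hypothesis W_free : row_free W.

Lemma gram_unit : W *m W^T \in unitmx.
Proof.
rewrite -row_free_unit; apply: inj_row_free => v vG0.
apply: (row_free_inj W_free); rewrite /= mul0mx; apply: sqnorm_eq0.
by rewrite /sqnorm /dot trmx_mul mulmxA -(mulmxA v) vG0 !mul0mx mxE.
Qed.

Definition proj (b : 'rV[R]_d) := b *m W^T *m invmx (W *m W^T) *m W.

Lemma dot_proj b u : (u <= W)%MS -> dot (proj b) u = dot b u.
Proof.
case/submxP=> y ->; rewrite /dot /proj trmx_mul !mulmxA -(mulmxA _ W).
by rewrite -(mulmxA _ (invmx _)) mulVmx ?gram_unit // mulmx1.
Qed.

Lemma sqnorm_proj b :
  sqnorm (proj b) = (b *m W^T *m invmx (W *m W^T) *m (b *m W^T)^T) 0 0.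
Proof.
rewrite /sqnorm /dot /proj !trmx_mul trmx_inv trmx_mul trmxK !mulmxA.
set G := W *m W^T.
by rewrite -[_ *m W *m W^T](mulmxA _ W) -/G -(mulmxA _ _ G) mulVmx ?gram_unit // mulmx1.
Qed.

Lemma sqnorm_le_proj b u : (u <= W)%MS -> sqnorm (b + u) = sqnorm b ->
  sqnorm u <= 4 * sqnorm (proj b).
Proof.
move=> uW; rewrite sqnormD -(dot_proj b uW) dotC => bu.
have := sqnorm_ge0 (u + 2%:R *: proj b).
by rewrite sqnormD sqnormZ dotZr; lra.
Qed.

End Projection.

Section EntryBounds.
Variable R : rcfType.

Lemma det_bound n (M : 'M[R]_n) (B : R) :
  (forall i j, `|M i j| <= B) -> `|\det M| <= n`!%:R * B ^+ n.
Proof.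
move=> MB; rewrite /determinant -card_Sn -sum1_card natr_sum mulr_suml.
apply: le_trans (ler_norm_sum _ _ _) _; apply: ler_sum => s _.
rewrite mul1r normrM normrX normrN1 expr1n mul1r normr_prod.
rewrite -[X in B ^+ X](card_ord n) -prodr_const.
by apply: ler_prod => i _; rewrite normr_ge0 MB.
Qed.

Lemma invmx_entry_bound n (G : 'M[R]_n) (B : R) :
  G \in unitmx -> 1 <= `|\det G| -> (forall i j, `|G i j| <= B) ->
  forall i j, `|invmx G i j| <= n.-1`!%:R * B ^+ n.-1.
Proof.
move=> Gu det_ge1 GB i j.
have det_gt0 : 0 < `|\det G| by apply: lt_le_trans det_ge1.
rewrite /invmx Gu !mxE /cofactor !normrM normrX normrN1 expr1n mul1r normrV ?unitfE;
  last by rewrite -normr_gt0.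
have minorB : `|\det (row' j (col' i G))| <= n.-1`!%:R * B ^+ n.-1.
  by apply: det_bound => k l; rewrite !mxE.
by apply: le_trans minorB; rewrite ler_pdivrMl // ler_peMl ?normr_ge0.
Qed.

Lemma quad_form_bound r (c : 'rV[R]_r) (M : 'M[R]_r) (B E : R) :
  (forall i j, `|M i j| <= B) -> (forall i, c 0 i ^+ 2 <= E) ->
  `|(c *m M *m c^T) 0 0| <= B * (r ^ 2)%:R * E.
Proof.
move=> MB cE.
have cc l m : `|c 0 l| * `|c 0 m| <= E.
  have := sqr_ge0 (`|c 0 l| - `|c 0 m|); rewrite sqrrB !real_normK ?num_real //.
  have := cE l; have := cE m; set z := `|c 0 l| * `|c 0 m|; lra.
have -> : (c *m M *m c^T) 0 0 = \sum_(m < r) \sum_(l < r) c 0 l * M l m * c 0 m.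
  by rewrite mxE; apply: eq_bigr => m _; rewrite !mxE mulr_suml.
have -> : B * (r ^ 2)%:R * E = \sum_(m < r) \sum_(l < r) (B * E).
  by rewrite !sumr_const !card_ord -mulrnA mulnn mulrAC mulr_natr.
apply: le_trans (ler_norm_sum _ _ _) _; apply: ler_sum => m _.
apply: le_trans (ler_norm_sum _ _ _) _; apply: ler_sum => l _.
rewrite !normrM mulrAC mulrC.
by apply: ler_pM; rewrite ?mulr_ge0 ?normr_ge0.
Qed.

Lemma int_gram_det_ge1 r d (Z : 'M[int]_(r, d)) (W : 'M[R]_(r, d)) :
  W = map_mx intr Z -> row_free W -> 1 <= `|\det (W *m W^T)|.
Proof.
move=> -> /gram_unit; rewrite map_trmx -map_mxM unitmxE !det_map_mx unitfE.
by rewrite intr_eq0 -intr_norm ler1z -gtz0_ge1 normr_gt0.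
Qed.

End EntryBounds.

Section SphereChords.
Variables (R : rcfType) (d : nat) (D : R).
Hypothesis D_ge0 : 0 <= D.
Implicit Types b p u w : 'rV[R]_d.

Lemma gram_entry_bound r (W : 'M[R]_(r, d)) :
  (forall l, sqnorm (row l W) <= D ^+ 2) -> forall i j, `|(W *m W^T) i j| <= D ^+ 2.
Proof.
move=> rowD i j.
have -> : (W *m W^T) i j = dot (row i W) (row j W).
  by rewrite dotE mxE; apply: eq_bigr => l _; rewrite !mxE.
rewrite -ler_sqr ?nnegrE ?exprn_ge0 // real_normK ?num_real //.
apply: le_trans (cauchy_schwarz _ _) _.
by rewrite expr2 ler_pM ?sqnorm_ge0.
Qed.

Lemma dot_sq_le b p w (S : R) : sqnorm (p + w) = sqnorm p ->
  sqnorm w <= D ^+ 2 -> sqnorm (p - b) <= S -> dot b w ^+ 2 <= D ^+ 4 + 2 * S * D ^+ 2.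
Proof.
rewrite sqnormD => pw wD pbS.
have -> : dot b w = dot p w - dot (p - b) w by rewrite dotBl opprB addrC subrK.
have w_ge0 := sqnorm_ge0 w; have pb_ge0 := sqnorm_ge0 (p - b).
have pbw : dot (p - b) w ^+ 2 <= S * D ^+ 2.
  by apply: le_trans (cauchy_schwarz _ _) _; apply: ler_pM.
have pw2 : dot p w ^+ 2 <= D ^+ 4 / 4.
  have -> : dot p w = - sqnorm w / 2 by lra.
  have : sqnorm w ^+ 2 <= (D ^+ 2) ^+ 2 by rewrite ler_sqr ?nnegrE ?exprn_ge0.
  by rewrite -exprM; lra.
have := sqr_ge0 (dot p w + dot (p - b) w); nra.
Qed.

Lemma sphere_chord_rank1 r (W : 'M[R]_(r, d)) b : \rank W = 1%N ->
  (forall l, sqnorm (row l W) <= D ^+ 2) ->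
  (forall l, sqnorm (b + row l W) = sqnorm b) ->
  forall u, (u <= W)%MS -> sqnorm (b + u) = sqnorm b -> sqnorm u <= D ^+ 2.
Proof.
move=> rW rowD bW u uW bu.
have [l Wl|W0] := pickP (fun l => row l W != 0); last first.
  move: rW; rewrite (_ : W = 0) ?mxrank0 //.
  by apply/row_matrixP => l; rewrite row0; apply/eqP/negbFE/W0.
have /submxP[y uy] : (u <= row l W)%MS.
  apply: submx_trans uW _; have [_ <-] := mxrank_leqif_sup (row_sub l W).
  by rewrite rank_rV Wl rW.
move: bu (bW l) (rowD l); rewrite uy [y]mx11_scalar mul_scalar_mx !sqnormD dotZr sqnormZ.
set t : R := y 0 0; set s := sqnorm (row l W); have s_ge0 : 0 <= s := sqnorm_ge0 _.
move=> bu bw sD; apply: le_trans sD.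
have := mulr_ge0 (sqr_ge0 (1 - t)) s_ge0; nra.
Qed.

Lemma sphere_chord_le r (W : 'M[R]_(r, d)) (p : 'I_r -> 'rV[R]_d) b (S : R) :
  row_free W -> 1 <= `|\det (W *m W^T)| ->
  (forall l, sqnorm (row l W) <= D ^+ 2) ->
  (forall l, sqnorm (p l + row l W) = sqnorm (p l)) ->
  (forall l, sqnorm (p l - b) <= S) ->
  forall u, (u <= W)%MS -> sqnorm (b + u) = sqnorm b ->
  sqnorm u <= 4 * (r.-1`!%:R * (D ^+ 2) ^+ r.-1 * (r ^ 2)%:R * (D ^+ 4 + 2 * S * D ^+ 2)).
Proof.
move=> Wfree detW rowD pW pb u uW bu.
apply: le_trans (sqnorm_le_proj Wfree uW bu) _.
rewrite (sqnorm_proj Wfree) ler_pM2l //; apply: le_trans (ler_norm _) _.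
apply: quad_form_bound.
  exact: invmx_entry_bound (gram_unit Wfree) detW (gram_entry_bound rowD).
move=> l; rewrite [X in X ^+ 2](_ : _ = dot b (row l W)); last first.
  by rewrite dotE mxE; apply: eq_bigr => i _; rewrite !mxE.
exact: dot_sq_le (pW l) (rowD l) (pb l).
Qed.

End SphereChords.

Section Walks.
Variables (R : rcfType) (d : nat) (D : R).
Hypothesis D_ge1 : 1 <= D.
Let D_ge0 : 0 <= D := le_trans ler01 D_ge1.
Implicit Types f : nat -> 'rV[int]_d.

Definition rv (a : 'rV[int]_d) : 'rV[R]_d := map_mx intr a.

Definition walk n f := forall i, (i < n)%N ->
  sqnorm (rv (f i.+1)) = sqnorm (rv (f i)) /\ sqnorm (rv (f i.+1) - rv (f i)) <= D ^+ 2.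

Definition steps f n : 'M[R]_(n, d) := map_mx intr (\matrix_(i < n) (f i.+1 - f i)).

Lemma row_steps f n i : row i (steps f n) = rv (f i.+1) - rv (f i).
Proof. by rewrite -map_row rowK map_mxB. Qed.

Lemma walk_prefix m n f : (m <= n)%N -> walk n f -> walk m f.
Proof. by move=> mn fw i im; apply: fw; apply: leq_trans mn. Qed.

Lemma walk_sqnorm n f : walk n f ->
  forall m, (m <= n)%N -> sqnorm (rv (f m)) = sqnorm (rv (f 0)).
Proof. by move=> fw; elim=> // m IH mn; rewrite (fw m mn).1 IH // ltnW. Qed.

Lemma walk_rcons n f (a : 'rV[int]_d) : walk n f ->
  sqnorm (rv a) = sqnorm (rv (f n)) -> sqnorm (rv a - rv (f n)) <= D ^+ 2 ->
  walk n.+1 (fun i => if (i <= n)%N then f i else a).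
Proof.
move=> fw an aD i; rewrite ltnS; case: ltngtP => // [ilt|->] _; last by [].
exact: fw.
Qed.

Lemma steps_sub f j n : (j <= n)%N -> (steps f j <= steps f n)%MS.
Proof.
move=> jn; apply/row_subP => i.
by apply: (eq_row_sub (widen_ord jn i)); rewrite !row_steps.
Qed.

Lemma disp_sub f n m : (m <= n)%N -> (rv (f m) - rv (f 0) <= steps f n)%MS.
Proof.
elim: m => [|m IH] mn; first by rewrite subrr sub0mx.
rewrite -[rv (f m.+1)](subrK (rv (f m))) -addrA.
apply: addmx_sub; last exact: IH (ltnW mn).
by apply: (eq_row_sub (Ordinal mn)); rewrite row_steps.
Qed.

Lemma steps_rank_jump f n k : (k < \rank (steps f n))%N ->
  exists j, [/\ (j < n)%N, (\rank (steps f j) <= k)%N & (k < \rank (steps f j.+1))%N].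
Proof.
move=> kn; have [j kj jmin] := ex_minnP (ex_intro (fun j => (k < \rank (steps f j))%N) n kn).
case: j kj jmin => [|j] kj jmin; first by move: kj; rewrite ltnNge (leq_trans (rank_leq_row _)).
exists j; split=> //; last by rewrite leqNgt; apply/negP => /jmin; rewrite ltnn.
by apply: jmin.
Qed.

(* Bound on the squared displacement of a walk whose steps span a space of
   dimension k: the estimate of [sphere_chord_le] for k >= 2, while for k = 1
   the sphere only meets the line b_0 + R w at b_0 and b_0 + w. *)
Fixpoint walk_bound k : R :=
  match k with
  | 0 => 0
  | 1 => D ^+ 2
  | (k'.+1 as k).+1 =>
    4 * (k`!%:R * (D ^+ 2) ^+ k * (k.+1 ^ 2)%:R * (D ^+ 4 + 2 * walk_bound k * D ^+ 2))
  end.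

Lemma walk_bound_ge0 k : 0 <= walk_bound k.
Proof.
elim: k => [|[|k] IH] //=; first exact: sqr_ge0.
apply: mulr_ge0 => //; apply: mulr_ge0; first by rewrite !mulr_ge0 ?exprn_ge0.
by rewrite addr_ge0 ?exprn_ge0 // !mulr_ge0 ?exprn_ge0.
Qed.

Lemma walk_boundSS k : walk_bound k.+2 =
  4 * ((k.+1)`!%:R * (D ^+ 2) ^+ k.+1 * (k.+2 ^ 2)%:R *
       (D ^+ 4 + 2 * walk_bound k.+1 * D ^+ 2)).
Proof. by []. Qed.

Lemma walk_bound_le_succ k : walk_bound k <= walk_bound k.+1.
Proof.
case: k => [|k]; first exact: sqr_ge0.
rewrite walk_boundSS; set w := walk_bound k.+1; set P := (_`!%:R * _ * _)%R.
have w_ge0 : 0 <= w := walk_bound_ge0 _.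
have D2_ge1 : 1 <= D ^+ 2 by rewrite exprn_ege1.
have P_ge1 : 1 <= P.
  have f_ge1 : 1 <= (k.+1)`!%:R :> R by rewrite ler1n fact_gt0.
  have s_ge1 : 1 <= (k.+2 ^ 2)%:R :> R by rewrite ler1n expn_gt0.
  by rewrite /P; apply: mulr_ege1 => //; apply: mulr_ege1 => //; exact: exprn_ege1.
have PD2_ge1 : 1 <= P * D ^+ 2 by rewrite mulr_ege1.
have := exprn_ge0 4 D_ge0; nra.
Qed.

Lemma walk_disp_le_succ k n j f : walk n f -> (j < n)%N ->
  \rank (steps f j.+1) = k.+1 -> (steps f n <= steps f j.+1)%MS ->
  (forall i, (i <= j)%N -> sqnorm (rv (f i) - rv (f 0)) <= walk_bound k) ->
  forall m, (m <= n)%N -> sqnorm (rv (f m) - rv (f 0)) <= walk_bound k.+1.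
Proof.
move=> fw jn rA sA IH m mn.
set A := steps f j.+1; set g := maxrankfun A; set W := rowsub g A.
have Wfree : row_free W := maxrowsub_free A.
have Wrow l : row l W = rv (f (g l).+1) - rv (f (g l)) by rewrite row_rowsub row_steps.
have gn l : (g l < n)%N := leq_trans (ltn_ord (g l)) jn.
have rowD l : sqnorm (row l W) <= D ^+ 2 by rewrite Wrow; exact: (fw _ (gn l)).2.
have Wsph l : sqnorm (rv (f (g l)) + row l W) = sqnorm (rv (f (g l))).
  by rewrite Wrow addrC subrK; exact: (fw _ (gn l)).1.
have IHg l : sqnorm (rv (f (g l)) - rv (f 0)) <= walk_bound k.
  by apply: IH; rewrite -ltnS.
have uW : (rv (f m) - rv (f 0) <= W)%MS.
  by rewrite (eq_maxrowsub A); exact: submx_trans (disp_sub f mn) sA.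
have bu : sqnorm (rv (f 0) + (rv (f m) - rv (f 0))) = sqnorm (rv (f 0)).
  by rewrite addrC subrK (walk_sqnorm fw mn).
case: k {IH} IHg rA => [|k] IHg rA.
  apply: (sphere_chord_rank1 _ rowD _ uW bu); first by rewrite (eq_maxrowsub A).
  move=> l; have /sqnorm_eq0/subr0_eq <- : sqnorm (rv (f (g l)) - rv (f 0)) = 0.
    by apply/le_anti; rewrite IHg sqnorm_ge0.
  exact: Wsph.
have detW : 1 <= `|\det (W *m W^T)|.
  apply: (int_gram_det_ge1 (Z := rowsub g (\matrix_(i < j.+1) (f i.+1 - f i)))) Wfree.
  by apply/matrixP => a c; rewrite !mxE.
have := sphere_chord_le D_ge0 Wfree detW rowD Wsph IHg uW bu.
by rewrite rA.
Qed.

Lemma walk_disp_le k n f : walk n f -> (\rank (steps f n) <= k)%N ->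
  forall m, (m <= n)%N -> sqnorm (rv (f m) - rv (f 0)) <= walk_bound k.
Proof.
elim: k n f => [|k IH] n f fw rk m mn.
  move: rk; rewrite leqn0 mxrank_eq0 => /eqP f0.
  by have := disp_sub f mn; rewrite f0 => /submx0null ->; rewrite sqnorm0.
have [rk'|] := leqP (\rank (steps f n)) k.
  exact: le_trans (IH n f fw rk' m mn) (walk_bound_le_succ k).
move=> kn; have [j [jn rj kj]] := steps_rank_jump kn.
have [rank_le rank_eq] := mxrank_leqif_sup (steps_sub f jn).
have rA : \rank (steps f j.+1) = k.+1.
  by apply/eqP; rewrite eqn_leq kj andbT (leq_trans rank_le rk).
have sA : (steps f n <= steps f j.+1)%MS by rewrite -rank_eq rA eqn_leq kn rk.
apply: (walk_disp_le_succ fw jn rA sA) m mn => i ij.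
exact: IH j f (walk_prefix (ltnW jn) fw) rj i ij.
Qed.

End Walks.

Lemma walk_bound_poly (R : rcfType) k : exists2 C : R, 0 <= C &
  forall D : R, 1 <= D -> walk_bound D k <= C * D ^+ (k * k.+1).
Proof.
elim: k => [|[|k] [C C_ge0 IH]]; first by exists 0 => // D _; rewrite mul0r.
  by exists 1 => // D _; rewrite mul1r.
pose N : R := 4 * ((k.+1)`!%:R * (k.+2 ^ 2)%:R).
have N_ge0 : 0 <= N by rewrite !mulr_ge0 ?ler0n.
exists (N * (1 + 2 * C)) => [|D D_ge1]; first by rewrite mulr_ge0 ?addr_ge0 ?mulr_ge0.
have D_ge0 : 0 <= D := le_trans ler01 D_ge1.
set X := (D ^+ 2) ^+ k.+1; set w := walk_bound D k.+1.
have X_ge0 : 0 <= X by rewrite !exprn_ge0.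
have deg_eq : D ^+ (k.+2 * k.+3) = X * D ^+ 2 * D ^+ (k.+1 * k.+2).
  by rewrite /X -exprM -!exprD; congr (_ ^+ _); ring.
have deg_le : X * D ^+ 4 <= D ^+ (k.+2 * k.+3).
  by rewrite /X -exprM -exprD ler_weXn2l //; nia.
rewrite walk_boundSS -/X -/w.
have -> : N * (1 + 2 * C) * D ^+ (k.+2 * k.+3) =
    N * (D ^+ (k.+2 * k.+3) + 2 * (C * D ^+ (k.+1 * k.+2)) * (X * D ^+ 2)).
  by rewrite deg_eq /N; ring.
have -> : 4 * ((k.+1)`!%:R * X * (k.+2 ^ 2)%:R * (D ^+ 4 + 2 * w * D ^+ 2)) =
    N * (X * D ^+ 4 + 2 * w * (X * D ^+ 2)) by rewrite /N; ring.
rewrite ler_wpM2l // lerD // ler_wpM2r ?mulr_ge0 ?exprn_ge0 // ler_wpM2l //.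
exact: IH.
Qed.

Section IntegerSpheres.
Variables (R : rcfType) (d : nat).
Implicit Types a b x y z : 'rV[int]_d.

Lemma enormE a : enorm R a = Num.sqrt (sqnorm (rv R a)).
Proof.
rewrite /enorm /sqnorm dotE; congr Num.sqrt.
by apply: eq_bigr => i _; rewrite !mxE expr2.
Qed.

Lemma enormN a : enorm R (- a) = enorm R a.
Proof. by rewrite !enormE /rv map_mxN sqnormN. Qed.

Lemma enormB a b : enorm R (a - b) = enorm R (b - a).
Proof. by rewrite -enormN opprB. Qed.

Lemma enorm_eq a b : enorm R a = enorm R b -> sqnorm (rv R a) = sqnorm (rv R b).
Proof. by rewrite !enormE => /(congr1 (fun t => t ^+ 2)); rewrite !sqr_sqrtr ?sqnorm_ge0. Qed.

Lemma enorm_le_sqr a (Y : R) : 0 <= Y -> (enorm R a <= Y) = (sqnorm (rv R a) <= Y ^+ 2).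
Proof.
move=> Y_ge0; rewrite enormE -ler_sqr ?nnegrE ?sqrtr_ge0 //.
by rewrite sqr_sqrtr ?sqnorm_ge0.
Qed.

Lemma simD_sym Delta a b : simD R Delta a b -> simD R Delta b a.
Proof. by case=> ab abD; split; [rewrite ab | rewrite /bracket enormB [b + a]addrC]. Qed.

(* Flipping the sign of z when [y - z] is |y + z| turns a ~-step into a step
   of length at most Delta. *)
Lemma simD_signed_step Delta x y z : simD R Delta y z -> x = y \/ x = - y ->
  exists t, [/\ t = z \/ t = - z, enorm R t = enorm R x & enorm R (t - x) <= Delta%:R].
Proof.
rewrite /simD /bracket ge_min => -[yz /orP yzD] xy.
case: xy yzD => -> [yzD|yzD].
- by exists z; rewrite enormB yz; split; first left.
- by exists (- z); rewrite -opprD !enormN addrC yz; split; first right.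
- by exists (- z); rewrite opprK addrC !enormN yz; split; first right.
- by exists z; rewrite opprK addrC enormN yz; split; first left.
Qed.

Lemma approxD_walk Delta a b : approxD R Delta a b ->
  exists n f, [/\ f 0%N = a, f n = b \/ f n = - b & walk (Delta%:R : R) n f].
Proof.
move=> /(@clos_rst_rstn1 _ _ a b); elim=> [|y z yz _ [n [f [f0 fn fw]]]].
  by exists 0%N, (fun=> a); split=> //; left.
have yz' : simD R Delta y z by case: yz => // /simD_sym.
have [t [tz tf tD]] := simD_signed_step yz' fn.
exists n.+1, (fun i => if (i <= n)%N then f i else t); split; rewrite ?ltnn //.
apply: walk_rcons => //; first exact: enorm_eq.
by rewrite -map_mxB -enorm_le_sqr ?ler0n.
Qed.

End IntegerSpheres.

Lemma leq_mulnS_half_fact d : (0 < d)%N -> (d * d.+1 <= (d.+1)`! %/ 2 * 2)%N.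
Proof.
case: d => // d _; rewrite divnK ?dvdn_fact // factS mulnC leq_mul2l /=.
by rewrite factS leq_pmulr ?fact_gt0.
Qed.

Theorem proposition3p1 (R : rcfType) (d : nat) (hd : (1 <= d)%N) :
  exists C : R, forall Delta : nat, (1 <= Delta)%N ->
    forall a b : 'rV[int]_d, approxD R Delta a b ->
      bracket R a b <= C * (Delta%:R) ^+ ((d.+1)`! %/ 2).
Proof.
have [C C_ge0 walkC] := walk_bound_poly R d.
exists (Num.sqrt C) => Delta Delta_ge1 a b ab.
have D_ge1 : 1 <= Delta%:R :> R by rewrite ler1n.
set Y := Num.sqrt C * _.
have Y_ge0 : 0 <= Y by rewrite mulr_ge0 ?sqrtr_ge0 ?exprn_ge0 ?ler0n.
have [n [f [f0 fn fw]]] := approxD_walk ab.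
have disp : sqnorm (rv R (f n) - rv R a) <= Y ^+ 2.
  rewrite -f0; apply: le_trans (walk_disp_le D_ge1 fw (rank_leq_col _) (leqnn n)) _.
  apply: le_trans (walkC _ D_ge1) _.
  rewrite exprMn sqr_sqrtr // -exprM ler_wpM2l // ler_weXn2l //.
  exact: leq_mulnS_half_fact.
rewrite /bracket ge_min !enorm_le_sqr // /rv map_mxB map_mxD.
case: fn disp => -> disp; apply/orP; [left | right].
  by rewrite -sqnormN opprB.
by move: disp; rewrite /rv map_mxN -opprD sqnormN addrC.
Qed.
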